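(* Let $f:X\to\mathcal G$ be a convex function and $x_0\in\operatorname{dom} f$. Suppose that either (i) $x_0$ solves the set-valued Stampacchia inequality: $f(x_0)=Z$, or for all $x\in\operatorname{dom} f$ with $f(x)\neq f(x_0)$ one has $0\notin f'(x_0,x-x_0)$; or (ii) for all $x\in\operatorname{dom} f$ with $f(x_0)\ne f(x)$ there exists $z^*\in C^-\setminus\{0\}$ such that $-\infty=\varphi_{f,z^*}(x_0)<\varphi_{f,z^*}(x)$ or $0<\varphi'_{f,z^*}(x_0,x-x_0)$. Then $x_0$ is a minimizer of $f$, i.e. $f(x_0)\in\operatorname{Min} f[X]$: for every $x\in X$, $f(x)\supseteq f(x_0)$ implies $f(x)=f(x_0)$.
   Context: $X$ is a real linear space and $Z$ a real locally convex Hausdorff space with topological dual $Z^*$. $C\subseteq Z$ is a closed convex cone with $0\in C$ such that $C^-=\{z^*\in Z^*: z^*(c)\le 0\ \forall c\in C\}$ satisfies $C^-\setminus\{0\}\ne\emptyset$. Let $\mathcal G=\{A\subseteq Z: A=\operatorname{cl}\operatorname{co}(A+C)\}$. For $A,B\in\mathcal G$: $A\oplus B=\operatorname{cl}\{a+b\}$, $tA=\{ta\}$ for $t>0$, $A\ominus B=\{z\in Z: B+\{z\}\subseteq A\}$. $f:X\to\mathcal G$ is convex if $f(tx_1+(1-t)x_2)\supseteq tf(x_1)\oplus(1-t)f(x_2)$ for $t\in(0,1)$; $\operatorname{dom}f=\{x:f(x)\ne\emptyset\}$. $f'(x,u)=\bigcap_{t_0>0}\operatorname{cl}\operatorname{co}\bigcup_{0<t<t_0}\frac1t\big(f(x+tu)\ominus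 f(x)\big)$. On $\overline{\mathbb R}$ use inf-addition $\dot+$ ($(-\infty)\dot+(+\infty)=+\infty$) and $r\ominus s=\inf\{t\in\mathbb R:r\le s\dot+t\}$ ($\inf\emptyset=+\infty$). $\varphi_{f,z^*}(x)=\inf\{-z^*(z):z\in f(x)\}$ ($+\infty$ if $f(x)=\emptyset$), $\varphi'_{f,z^*}(x,u)=\inf_{t>0}\frac1t\big(\varphi_{f,z^*}(x+tu)\ominus\varphi_{f,z^*}(x)\big)$. *)

From HB Require Import structures.
From mathcomp Require Import all_boot all_order all_algebra.
From mathcomp Require Import all_classical all_reals all_analysis.
Set Implicit Arguments. Unset Strict Implicit. Unset Printing Implicit Defensive.
Import Order.TTheory GRing.Theory Num.Theory.
Import numFieldNormedType.Exports.
Local Open Scope classical_set_scope.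
Local Open Scope ring_scope.

Section SetValued.
Variable R : realType.

Definition cvx {V : lmodType R} (A : set V) : Prop :=
  forall x y (t : R), A x -> A y -> 0 <= t -> t <= 1 ->
    A (t *: x + (1 - t) *: y).

Definition conv_hull {V : lmodType R} (A : set V) : set V :=
  [set z | forall D : set V, cvx D -> A `<=` D -> D z].

Definition clco {Z : tvsType R} (A : set Z) : set Z := closure (conv_hull A).

Definition msum {V : lmodType R} (A B : set V) : set V :=
  [set a + b | a in A & b in B].

Definition oplus {Z : tvsType R} (A B : set Z) : set Z := closure (msum A B).

Definition sscale {V : lmodType R} (t : R) (A : set V) : set V :=
  [set t *: a | a in A].

Definition ominus {V : lmodType R} (A B : set V) : set V :=
  [set z | forall b, B b -> A (b + z)].

Definition is_dual {Z : tvsType R} (zs : Z -> R) : Prop :=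
  (forall (a : R) (u v : Z), zs (a *: u + v) = a * zs u + zs v) /\
  continuous zs.

Definition closed_convex_cone {Z : tvsType R} (C : set Z) : Prop :=
  closed C /\ cvx C /\ C 0 /\ (forall (t : R) c, 0 < t -> C c -> C (t *: c)).

Definition in_negdual {Z : tvsType R} (C : set Z) (zs : Z -> R) : Prop :=
  is_dual zs /\ (forall c, C c -> zs c <= 0).

Definition in_G {Z : tvsType R} (C : set Z) (A : set Z) : Prop :=
  A = clco (msum A C).

Definition sv_convex {X : lmodType R} {Z : tvsType R} (f : X -> set Z) : Prop :=
  forall (t : R) x1 x2, 0 < t -> t < 1 ->
    oplus (sscale t (f x1)) (sscale (1 - t) (f x2)) `<=`
    f (t *: x1 + (1 - t) *: x2).

Definition sv_dom {X : lmodType R} {Z : tvsType R} (f : X -> set Z) : set X :=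
  [set x | f x <> set0].

Definition sv_deriv {X : lmodType R} {Z : tvsType R} (f : X -> set Z)
    (x u : X) : set Z :=
  \bigcap_(t0 in [set t0 : R | 0 < t0])
    clco (\bigcup_(t in [set t : R | 0 < t < t0])
            sscale t^-1 (ominus (f (x + t *: u)) (f x))).

Local Open Scope ereal_scope.

Definition inf_add (r s : \bar R) : \bar R :=
  if ((r == -oo) && (s == +oo)) || ((r == +oo) && (s == -oo)) then +oo
  else r + s.

(* r (-) s = inf {t in R | r <= s +. t}, inf of empty = +oo *)
Definition eminus (r s : \bar R) : \bar R :=
  ereal_inf [set t%:E | t in [set t : R | r <= inf_add s t%:E]].

(* phi_{f,z*}(x) = inf {- z*(z) | z in f x}  (+oo if f x empty) *)
Definition phi {X : lmodType R} {Z : tvsType R} (f : X -> set Z)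
    (zs : Z -> R) (x : X) : \bar R :=
  ereal_inf [set (- zs z)%:E | z in f x].

Definition phi_deriv {X : lmodType R} {Z : tvsType R} (f : X -> set Z)
    (zs : Z -> R) (x u : X) : \bar R :=
  ereal_inf [set (t^-1)%:E * eminus (phi f zs (x + t *: u)) (phi f zs x)
            | t in [set t : R | (0 < t)%R]].

End SetValued.

From HB Require Import structures.
From mathcomp Require Import all_boot all_order all_algebra.
From mathcomp Require Import all_classical all_reals all_analysis.
Set Implicit Arguments. Unset Strict Implicit. Unset Printing Implicit Defensive.
Import Order.TTheory GRing.Theory Num.Theory.
Local Open Scope classical_set_scope.
Local Open Scope ring_scope.

(* Suppose f x0 is strictly contained in f x.  Convexity then gives
   f x0 ⊆ f (x0 + t (x - x0)) for every t in (0,1), i.e. 0 lies in every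
   difference quotient (f (x0 + t u) ⊖ f x0) / t, hence 0 ∈ f'(x0, x - x0),
   against (i).  For a scalarization, inclusion reverses the order of phi, so
   the difference quotients of phi are <= 0, giving phi' <= 0, and
   phi (x) <= phi (x0) rules out phi (x0) = -oo < phi (x); both contradict
   (ii). *)

Section Minimizer.
Variables (R : realType) (X : lmodType R) (Z : tvsType R) (f : X -> set Z).

Lemma sv_convex_segment_sub (x0 x : X) (t : R) :
  sv_convex f -> 0 < t -> t < 1 -> f x0 `<=` f x ->
  f x0 `<=` f (x0 + t *: (x - x0)).
Proof.
move=> fcvx t_gt0 t_lt1 fx0x z fx0z.
have -> : x0 + t *: (x - x0) = t *: x + (1 - t) *: x0.
  by rewrite scalerBr scalerBl scale1r addrCA addrC.
apply: (fcvx t x x0 t_gt0 t_lt1); apply: subset_closure.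
exists (t *: z); first by exists z => //; exact: fx0x.
exists ((1 - t) *: z); first by exists z.
by rewrite -scalerDl addrCA subrr addr0 scale1r.
Qed.

Lemma ominus0 (A B : set Z) : B `<=` A -> ominus A B 0.
Proof. by move=> BA b Bb; rewrite addr0; exact: BA. Qed.

Lemma sv_deriv0 (x u : X) :
  (forall t : R, 0 < t -> t < 1 -> f x `<=` f (x + t *: u)) ->
  sv_deriv f x u 0.
Proof.
move=> fxt t0 /= t0_gt0.
pose t := Num.min t0 1 / 2.
have m_gt0 : 0 < Num.min t0 1 by rewrite lt_min t0_gt0 ltr01.
have t_gt0 : 0 < t by rewrite divr_gt0.
have t_ltm : t < Num.min t0 1 by rewrite ltr_pdivrMr // ltr_pMr // ltr1n.
have [t_lt0 t_lt1] : t < t0 /\ t < 1 by move: t_ltm; rewrite lt_min => /andP.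
apply: subset_closure => D _ AD; apply: AD.
exists t; first by rewrite /= t_gt0.
by exists 0; [exact: ominus0 (fxt t t_gt0 t_lt1) | rewrite scaler0].
Qed.

Lemma phi_subset (zs : Z -> R) (x y : X) :
  f x `<=` f y -> (phi f zs y <= phi f zs x)%E.
Proof. by move=> fxy; apply: ereal_inf_le_tmp => _ [z fxz <-]; exists z => //; exact: fxy. Qed.

Lemma eminus_le0 (r s : \bar R) : (r <= s)%E -> (eminus r s <= 0)%E.
Proof.
move=> rs; apply: ereal_inf_lbound; exists 0%R => //=.
by rewrite /inf_add; case: s rs => [s'| |] rs //=; rewrite ?adde0.
Qed.

Lemma phi_deriv_le0 (zs : Z -> R) (x u : X) (t : R) :
  0 < t -> f x `<=` f (x + t *: u) -> (phi_deriv f zs x u <= 0)%E.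
Proof.
move=> t_gt0 fxt.
apply: (@le_trans _ _ (t^-1%:E * eminus (phi f zs (x + t *: u)) (phi f zs x))%E).
  by apply: ereal_inf_lbound; exists t.
apply: mule_ge0_le0; first by rewrite lee_fin invr_ge0 ltW.
exact/eminus_le0/phi_subset.
Qed.

End Minimizer.

Theorem mainTheorem3 (R : realType) (X : lmodType R) (Z : tvsType R)
    (C : set Z) (f : X -> set Z) (x0 : X) :
  hausdorff_space Z ->
  closed_convex_cone C ->
  (exists zs : Z -> R, in_negdual C zs /\ zs <> (fun=> 0)) ->
  (forall x, in_G C (f x)) ->
  sv_convex f ->
  sv_dom f x0 ->
  ( (f x0 = setT \/
     (forall x, sv_dom f x -> f x <> f x0 -> ~ sv_deriv f x0 (x - x0) 0))
    \/
    (forall x, sv_dom f x -> f x0 <> f x ->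
       exists zs : Z -> R, in_negdual C zs /\ zs <> (fun=> 0) /\
         ((phi f zs x0 = -oo%E /\ (-oo < phi f zs x)%E) \/
          (0 < phi_deriv f zs x0 (x - x0))%E)) ) ->
  forall x, f x0 `<=` f x -> f x = f x0.
Proof.
move=> _ _ _ _ fcvx domx0 hyp x fx0x.
have domx : sv_dom f x by move=> fx0; apply: domx0; rewrite -subset0 -fx0.
apply: contrapT => fx_neq.
have seg t : 0 < t -> t < 1 -> f x0 `<=` f (x0 + t *: (x - x0)).
  by move=> t_gt0 t_lt1; exact: sv_convex_segment_sub.
case: hyp => [[fx0T | stampacchia] | scalar].
- by apply: fx_neq; apply/seteqP; split => // z _; rewrite fx0T.
- exact: (stampacchia x domx fx_neq (sv_deriv0 seg)).
- have [zs [_ [_ [[phix0 phix] | phi'_gt0]]]] := scalar x domx (nesym fx_neq).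
    by move: phix; rewrite -phix0 ltNge (phi_subset zs fx0x).
  have half_gt0 : 0 < (2^-1 : R) by rewrite invr_gt0.
  have half_lt1 : (2^-1 : R) < 1 by rewrite invf_lt1 // ltr1n.
  have := phi_deriv_le0 zs half_gt0 (seg _ half_gt0 half_lt1).
  by rewrite leNgt phi'_gt0.
Qed.
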